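(* Let $\alpha^\star_n\in\mathcal D^\star_n$ for every $n$ and $\alpha^\star\in\mathcal D^\star_0$ with $\sup_{\Delta\times[0,1]^d}|\alpha^\star_n-\alpha^\star|\to0$. Then for every $j\in\{1,\dots,d\}$, $$\sup_{(s,t,u)\in\Delta\times[0,1]}\Big|\sqrt n\,\lambda_n(s,t)\{I_n(U^\star_n+n^{-1/2}\alpha^\star_{n,j})(s,t,u)-u\}+\alpha^\star_j(s,t,u)\Big|\to0.$$
   Context: $C$ is a fixed $d$-dimensional copula. $\Delta=\{(s,t)\in[0,1]^2:s\le t\}$, $\lambda_n(s,t)=(\lfloor nt\rfloor-\lfloor ns\rfloor)/n$. $\mathcal E$ is the set of right-continuous nondecreasing $F:[0,1]\to[0,1]$ with $F(0)=0$, $F(1)=1$. $\mathcal E^\star_n$ is the set of $F^\star:\Delta\times[0,1]\to[0,1]$ such that $u\mapsto\lambda_n(s,t)^{-1}F^\star(s,t,u)\in\mathcal E$ when $\lfloor ns\rfloor<\lfloor nt\rfloor$ and $F^\star(s,t,\cdot)=0$ when $\lfloor ns\rfloor=\lfloor nt\rfloor$. For $F^\star\in\mathcal E^\star_n$, $I_n(F^\star)(s,t,u)=\inf\{v\in[0,1]:F^\star(s,t,v)\ge\lambda_n(s,t)u\}$. $U^\star_n(s,t,u)=\lambda_n(s,t)u$. For $H^\star$ on $\Delta\times[0,1]^d$, $H^\star_j(s,t,u)=H^\star(s,t,\vec u_{\{j\}})$, where $\vec u_{\{j\}}$ has $j$th component $u$ and others $1$; $\mathcal E^\star_{n,d}=\{H^\star:\Delta\times[0,1]^d\to[0,1]:H^\star_j\in\mathcal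 E^\star_n\ \forall j\}$. $C^\star_n(s,t,\vec u)=\lambda_n(s,t)C(\vec u)$. $\mathcal D^\star$ is the set of bounded $\alpha^\star$ on $\Delta\times[0,1]^d$ with $\alpha^\star(s,t,\cdot)=0$ if $s=t$, and $\alpha^\star(s,t,\vec u)=0$ if $s<t$ and either some component of $\vec u$ is $0$ or $\vec u=(1,\dots,1)$. $\mathcal D^\star_n=\{\alpha^\star\in\mathcal D^\star:C^\star_n+n^{-1/2}\alpha^\star\in\mathcal E^\star_{n,d}\}$, $\mathcal D^\star_0=\mathcal D^\star\cap\mathcal C(\Delta\times[0,1]^d)$. *)

From HB Require Import structures.
From mathcomp Require Import all_boot all_order all_algebra.
From mathcomp Require Import boolp classical_sets reals.
Set Implicit Arguments. Unset Strict Implicit. Unset Printing Implicit Defensive.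
Import Order.TTheory GRing.Theory Num.Theory.
Local Open Scope ring_scope.
Local Open Scope classical_set_scope.

Section Defs.
Variables (R : realType) (d : nat).

Definition unit_cube (u : 'I_d -> R) : Prop := forall i, 0 <= u i <= 1.

Definition vec1 (j : 'I_d) (u : R) : 'I_d -> R :=
  fun i => if i == j then u else 1.

Definition is_copula (C : ('I_d -> R) -> R) : Prop :=
  [/\ (forall u, unit_cube u -> (exists i, u i = 0) -> C u = 0),
      (forall (j : 'I_d) (u : R), 0 <= u <= 1 -> C (vec1 j u) = u) &
      (forall a b : 'I_d -> R, unit_cube a -> unit_cube b ->
         (forall i, a i <= b i) ->
         0 <= \sum_(S : {set 'I_d})
                (-1) ^+ #|~: S| * C (fun i => if i \in S then b i else a i))].

Definition lam (n : nat) (s t : R) : R :=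
  (Num.floor (n%:R * t) - Num.floor (n%:R * s))%:~R / n%:R.

Definition inDelta (s t : R) : Prop := 0 <= s /\ s <= t /\ t <= 1.

Definition classE (F : R -> R) : Prop :=
  [/\ (forall x, 0 <= x <= 1 -> 0 <= F x <= 1),
      (forall x y, 0 <= x -> x <= y -> y <= 1 -> F x <= F y),
      (forall x, 0 <= x < 1 -> forall e, 0 < e -> exists2 del, 0 < del &
         forall y, x <= y -> y < x + del -> y <= 1 -> `|F y - F x| < e),
      F 0 = 0 & F 1 = 1].

Definition classEstar (n : nat) (F : R -> R -> R -> R) : Prop :=
  forall s t, inDelta s t ->
    if (Num.floor (n%:R * s) < Num.floor (n%:R * t))%R
    then classE (fun u => (lam n s t)^-1 * F s t u)
    else (forall u, 0 <= u <= 1 -> F s t u = 0).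

Definition In_inv (n : nat) (F : R -> R -> R -> R) (s t u : R) : R :=
  inf [set v : R | 0 <= v <= 1 /\ lam n s t * u <= F s t v].

Definition Ustar (n : nat) (s t u : R) : R := lam n s t * u.

Definition marg (H : R -> R -> ('I_d -> R) -> R) (j : 'I_d) : R -> R -> R -> R :=
  fun s t u => H s t (vec1 j u).

Definition classEstar_d (n : nat) (H : R -> R -> ('I_d -> R) -> R) : Prop :=
  (forall s t u, inDelta s t -> unit_cube u -> 0 <= H s t u <= 1) /\
  (forall j, classEstar n (marg H j)).

Definition Cstar (C : ('I_d -> R) -> R) (n : nat) (s t : R) (u : 'I_d -> R) : R :=
  lam n s t * C u.

Definition classD (a : R -> R -> ('I_d -> R) -> R) : Prop :=
  [/\ (exists M, forall s t u, inDelta s t -> unit_cube u -> `|a s t u| <= M),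
      (forall s u, 0 <= s <= 1 -> unit_cube u -> a s s u = 0) &
      (forall s t u, inDelta s t -> s < t -> unit_cube u ->
         ((exists i, u i = 0) \/ (forall i, u i = 1)) -> a s t u = 0)].

Definition classDn (C : ('I_d -> R) -> R) (n : nat)
  (a : R -> R -> ('I_d -> R) -> R) : Prop :=
  classD a /\
  classEstar_d n (fun s t u => Cstar C n s t u + (Num.sqrt n%:R)^-1 * a s t u).

Definition cont_on_dom (a : R -> R -> ('I_d -> R) -> R) : Prop :=
  forall s t u, inDelta s t -> unit_cube u ->
  forall e, 0 < e -> exists2 del, 0 < del &
    forall s' t' u', inDelta s' t' -> unit_cube u' ->
      `|s - s'| < del -> `|t - t'| < del -> (forall i, `|u i - u' i| < del) ->
      `|a s t u - a s' t' u'| < e.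

Definition classD0 (a : R -> R -> ('I_d -> R) -> R) : Prop :=
  classD a /\ cont_on_dom a.

End Defs.

From HB Require Import structures.
From mathcomp Require Import all_boot all_order all_algebra.
From mathcomp Require Import all_classical all_reals all_analysis.
From mathcomp Require Import ring lra.
Import Order.TTheory GRing.Theory Num.Theory.
Import numFieldNormedType.Exports.
Local Open Scope ring_scope.
Local Open Scope classical_set_scope.

(* Fix n, s <= t and u, and write p = sqrt n * lambda_n(s,t), A = alpha_{n,j}(s,t,.),
   B = alpha_j(s,t,.).  After rescaling, the generalized inverse becomes the first
   point v of [0,1] where p (v - u) + A v >= 0, so p (v - u) is pinned between the
   values of -A just right and just left of v (or v = 0).  As A is uniformly close
   to B, two regimes remain.  If lambda_n(s,t) is small then so is t - s, and B is
   uniformly small because alpha vanishes on the diagonal and is uniformly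
   continuous on the compact set Delta x [0,1].  Otherwise p is of order sqrt n,
   which forces v close to u, and uniform continuity gives B v close to B u. *)

Section HeineCantor.
Context {R : realType} {T : pseudoMetricType R}.

Lemma compact_unif_continuous_on (K : set T) (f : T -> R) : compact K ->
  (forall x, K x -> forall e, 0 < e -> exists2 del, 0 < del &
     forall y, K y -> ball x del y -> `|f x - f y| < e) ->
  forall e, 0 < e -> exists2 del, 0 < del &
     forall x y, K x -> K y -> ball x del y -> `|f x - f y| < e.
Proof.
move=> Kc fc e e_gt0.
pose P (n : nat) x := forall y, K y -> ball x n.+1%:R^-1 y -> `|f x - f y| < e.
have cover := (near_covering_withinP K).2 ((compact_near_coveringP K).1 Kc).
have PK : \forall n \near \oo, K `<=` P n.
  apply: cover => z Kz.
  have e2_gt0 : 0 < e / 2 by rewrite divr_gt0.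
  have [del del_gt0 fz] := fc z Kz _ e2_gt0.
  have del2_gt0 : 0 < del / 2 by rewrite divr_gt0.
  near=> x n => Kx y Ky xy.
  have zx : ball z (del / 2) x by near: x; exact: nbhsx_ballx.
  have n_small : n.+1%:R^-1 < del / 2.
    by near: n; exact: (near_infty_natSinv_lt (PosNum del2_gt0)).
  have zy : ball z del y := ball_split zx (le_ball (ltW n_small) xy).
  have zx' : ball z del x by apply: le_ball zx; lra.
  have := fz x Kx zx'; have := fz y Ky zy.
  have := ler_distD (f z) (f x) (f y); rewrite [`|f x - f z|]distrC; lra.
have [n Pn] := filter_ex PK.
exists n.+1%:R^-1 => [|x y Kx Ky]; first by rewrite invr_gt0 ltr0n.
exact: Pn.
Unshelve. all: by end_near. Qed.

End HeineCantor.

Definition delta_box {R : realType} : set (R * R * R) :=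
  [set x | inDelta x.1.1 x.1.2 /\ 0 <= x.2 <= 1].

Lemma compact_delta_box {R : realType} : compact (@delta_box R).
Proof.
have -> : @delta_box R =
    ((`[0, 1] `*` `[0, 1]) `*` `[0, 1]) `&` [set x | x.1.1 <= x.1.2].
  apply/seteqP; split => -[[s t] w]; rewrite /delta_box /inDelta /= !in_itv /=.
    by move=> [[s0 [st t1]] ->]; rewrite s0 t1 st (le_trans s0 st) (le_trans st t1).
  by move=> [[[/andP[-> _] /andP[_ ->]] ->] ->].
apply: compact_closedI.
  by apply: compact_setX; [apply: compact_setX|]; exact: segment_compact.
rewrite (_ : mkset _ = ((fun x : R * R * R => x.1.2) - (fun x => x.1.1)) @^-1`
                       [set r | 0 <= r]); last first.
  by apply/seteqP; split => x /=; rewrite subr_ge0.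
apply: (preimage_closed _ (@closed_ge _ _)) => x _.
by apply: continuousB; apply: cvg_comp; try exact: cvg_fst; exact: cvg_snd.
Qed.

Section Marginals.
Context {R : realType} {d : nat}.
Implicit Types (s t w : R) (j : 'I_d) (a : R -> R -> ('I_d -> R) -> R).

Lemma unit_cube_vec1 j w : 0 <= w <= 1 -> unit_cube (vec1 j w).
Proof. by move=> w01 i; rewrite /vec1; case: ifP; rewrite ?ler01 ?lexx. Qed.

Lemma dist_vec1 j w w' (del : R) : 0 < del -> `|w - w'| < del ->
  forall i, `|vec1 j w i - vec1 j w' i| < del.
Proof. by move=> ? ? i; rewrite /vec1; case: ifP; rewrite ?subrr ?normr0. Qed.

Lemma classD_boundary a s t (u : 'I_d -> R) : classD a -> inDelta s t ->
  unit_cube u -> (exists i, u i = 0) \/ (forall i, u i = 1) -> a s t u = 0.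
Proof.
move=> [_ a_ss a_bd] st u1 u_bd; have [s0 [le_st t1]] := st.
have [eq_st|neq_st] := eqVneq s t.
  by rewrite -eq_st in t1 *; apply: a_ss; rewrite ?s0 ?t1.
by apply: a_bd; rewrite ?lt_neqAle ?neq_st.
Qed.

Lemma classD_marg_diag {a} j {s w} : classD a -> 0 <= s <= 1 -> 0 <= w <= 1 ->
  marg a j s s w = 0.
Proof. by move=> [_ a_ss _] s01 w01; apply: a_ss => //; exact: unit_cube_vec1. Qed.

Lemma classD_marg0 {a} j {s t} : classD a -> inDelta s t -> marg a j s t 0 = 0.
Proof.
move=> aD st; apply: classD_boundary => //.
  by apply: unit_cube_vec1; rewrite lexx ler01.
by left; exists j; rewrite /vec1 eqxx.
Qed.

Lemma classD_marg1 {a} j {s t} : classD a -> inDelta s t -> marg a j s t 1 = 0.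
Proof.
move=> aD st; apply: classD_boundary => //.
  by apply: unit_cube_vec1; rewrite lexx ler01.
by right => i; rewrite /vec1; case: ifP.
Qed.

Definition marg_modulus a j (eta e : R) : Prop :=
  forall s t w s' t' w', inDelta s t -> 0 <= w <= 1 -> inDelta s' t' -> 0 <= w' <= 1 ->
    `|s - s'| < eta -> `|t - t'| < eta -> `|w - w'| < eta ->
    `|marg a j s t w - marg a j s' t' w'| < e.

Lemma marg_unif_continuous a j : cont_on_dom a ->
  forall e, 0 < e -> exists2 eta, 0 < eta & marg_modulus a j eta e.
Proof.
move=> a_cont e e_gt0.
have [|eta eta_gt0 unif] := @compact_unif_continuous_on _ _ _
  (fun x => marg a j x.1.1 x.1.2 x.2) compact_delta_box _ e e_gt0.
  move=> [[s t] w] [/= st w01] e' e'_gt0.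
  have [del del_gt0 a_del] := a_cont s t _ st (unit_cube_vec1 j _ w01) e' e'_gt0.
  exists del => // -[[s' t'] w'] [st' w01'] [[/= ss' tt'] ww'].
  by apply: a_del; [| exact: unit_cube_vec1 | | | exact: dist_vec1].
exists eta => // s t w s' t' w' st w01 st' w01' ss' tt' ww'.
exact: (unif (s, t, w) (s', t', w')).
Qed.

Lemma marg_small_near_diag a j (eta e : R) s t w : classD a ->
  marg_modulus a j eta e -> inDelta s t -> 0 <= w <= 1 -> t - s < eta ->
  `|marg a j s t w| < e.
Proof.
move=> aD a_mod st w01 ts; have [s0 [le_st t1]] := st.
have s1 := le_trans le_st t1.
have s01 : 0 <= s <= 1 by rewrite s0 s1.
have ss : inDelta s s by split; [|split].
have eta_gt0 : 0 < eta by apply: le_lt_trans ts; rewrite subr_ge0.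
have := a_mod s t w s s w st w01 ss w01.
rewrite (classD_marg_diag j aD s01 w01) subr0 !subrr normr0 ger0_norm ?subr_ge0 //.
by move/(_ eta_gt0 ts eta_gt0).
Qed.

End Marginals.

Section Lambda.
Context {R : realType}.
Implicit Types (n : nat) (s t : R).

Lemma lam_ge0 n s t : s <= t -> 0 <= lam n s t.
Proof.
move=> le_st; rewrite /lam divr_ge0 ?ler0n // ler0z subr_ge0 le_floor //.
by rewrite ler_wpM2l.
Qed.

Lemma ltr_sub_lamD n s t : (0 < n)%N -> t - s < lam n s t + n%:R^-1.
Proof.
move=> n_gt0; have n_gt0' : (0 : R) < n%:R by rewrite ltr0n.
rewrite /lam -(ltr_pM2r n_gt0') [X in _ < X]mulrDl divfK ?mulVf ?gt_eqF // intrB.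
have := floor_le (n%:R * s); have := floorD1_gt (n%:R * t); rewrite intrD; lra.
Qed.

End Lambda.

Definition crossing {R : realType} (p u : R) (A : R -> R) : R :=
  inf [set v | 0 <= v <= 1 /\ 0 <= p * (v - u) + A v].

Lemma In_inv_shift {R : realType} n (r : R) (F : R -> R -> R -> R) s t u :
  0 < r ->
  In_inv n (fun s' t' u' => Ustar n s' t' u' + r^-1 * F s' t' u') s t u =
  crossing (r * lam n s t) u (F s t).
Proof.
move=> r_gt0; rewrite /In_inv /crossing /Ustar; congr inf; apply: funext => v /=.
suff -> : (lam n s t * u <= lam n s t * v + r^-1 * F s t v) =
          (0 <= r * lam n s t * (v - u) + F s t v) by [].
have ri_gt0 : 0 < r^-1 by rewrite invr_gt0.
rewrite -subr_ge0 -[X in _ = X](pmulr_rge0 _ ri_gt0).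
by congr (_ <= _); field; rewrite gt_eqF.
Qed.

Lemma exists_small_step {R : realType} {p c e : R} : 0 <= p -> 0 < c -> 0 < e ->
  exists del, [/\ 0 < del, del <= c & p * del < e].
Proof.
move=> p_ge0 c_gt0 e_gt0; have p1_gt0 : 0 < p + 1 by lra.
exists (Num.min c (e / (p + 1))); split.
- by rewrite lt_min c_gt0 divr_gt0.
- by rewrite ge_min lexx.
apply: (@le_lt_trans _ _ (p * (e / (p + 1)))).
  by rewrite ler_wpM2l ?ge_min ?lexx ?orbT.
by rewrite mulrA ltr_pdivrMr // mulrC ltr_pM2l //; lra.
Qed.

Section Crossing.
Context {R : realType} {p u : R} {A : R -> R}.
Hypotheses (p_ge0 : 0 <= p) (u01 : 0 <= u <= 1) (A1 : A 1 = 0).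

Let u_ge0 : 0 <= u. Proof. by case/andP: u01. Qed.

Let S := [set v | 0 <= v <= 1 /\ 0 <= p * (v - u) + A v].
Let v := crossing p u A.

Let S1 : S 1.
Proof.
rewrite /S /= A1 addr0 ler01 lexx; split => //.
by rewrite mulr_ge0 ?subr_ge0; case/andP: u01.
Qed.

Let S_lb : has_lbound S.
Proof. by exists 0 => y [/andP[]]. Qed.

Let v_le y : S y -> v <= y.
Proof. exact: (ge_inf S_lb). Qed.

Lemma crossing_ge0 : 0 <= v.
Proof. by apply: lb_le_inf; [exists 1; exact: S1 | move=> y [/andP[]]]. Qed.

Lemma crossing_le1 : v <= 1.
Proof. exact: v_le S1. Qed.

Lemma crossing_lower {del : R} : 0 < del -> exists2 y, 0 <= y <= 1 &
  v <= y < v + del /\ - A y - p * del <= p * (v - u).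
Proof.
move=> del_gt0; have [y Sy y_lt] := inf_adherent del_gt0 (conj (ex_intro _ 1 S1) S_lb).
have [y01 Ay] := Sy; exists y => //; rewrite v_le //= y_lt; split => //.
have : p * (y - v) <= p * del by rewrite ler_wpM2l //; rewrite -/v in y_lt; lra.
lra.
Qed.

Lemma crossing_upper {del : R} : 0 < del -> v = 0 \/ exists2 y, 0 <= y <= 1 &
  v - del <= y <= v /\ p * (v - u) < p * del - A y.
Proof.
move=> del_gt0; have [v0|v_neq0] := eqVneq v 0; [by left | right].
have v_gt0 : 0 < v by rewrite lt_def v_neq0 crossing_ge0.
pose dd := Num.min v del.
have dd_gt0 : 0 < dd by rewrite lt_min v_gt0.
have [dd_v dd_del] : dd <= v /\ dd <= del by rewrite !ge_min !lexx orbT.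
have y01 : 0 <= v - dd <= 1 by have := crossing_le1; rewrite -/v; lra.
have Ay : p * (v - dd - u) + A (v - dd) < 0.
  rewrite ltNge; apply/negP => Ay; have := v_le (v - dd) (conj y01 Ay); lra.
exists (v - dd) => //; split; first by apply/andP; split; lra.
have : p * dd <= p * del by rewrite ler_wpM2l.
lra.
Qed.

Lemma crossing_near {K eta : R} : 0 < p -> 0 < eta ->
  (forall w, 0 <= w <= 1 -> `|A w| <= K) -> 8 * K <= p * eta ->
  `|v - u| <= eta / 4.
Proof.
move=> p_gt0 eta_gt0 AK pK; have eta8_gt0 : 0 < eta / 8 by rewrite divr_gt0.
have A_bounds w : 0 <= w <= 1 -> - K <= A w <= K by move=> w01; rewrite -ler_norml AK.
rewrite ler_norml; apply/andP; split; rewrite -(ler_pM2l p_gt0).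
  have [y y01 [_ lower]] := crossing_lower eta8_gt0.
  have := A_bounds y y01; lra.
have [->|[y y01 [_ upper]]] := crossing_upper eta8_gt0.
  have := mulr_ge0 (ltW p_gt0) u_ge0; have := mulr_ge0 (ltW p_gt0) (ltW eta_gt0).
  lra.
have := A_bounds y y01; lra.
Qed.

Lemma crossing_estimate_flat {B : R -> R} {e : R} :
  (forall w, 0 <= w <= 1 -> `|A w - B w| <= e) ->
  (forall w, 0 <= w <= 1 -> `|B w| < e) ->
  `|p * (v - u) + B u| <= 4 * e.
Proof.
move=> AB B_small.
have e_gt0 : 0 < e := le_lt_trans (normr_ge0 _) (B_small u u01).
have [del [del_gt0 _ pdel]] := exists_small_step p_ge0 ltr01 e_gt0.
have bounds w : 0 <= w <= 1 -> - e <= A w - B w <= e /\ - e < B w < e.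
  by move=> w01; rewrite -ler_norml -ltr_norml AB ?B_small.
have [y y01 [_ lower]] := crossing_lower del_gt0.
have [/andP[? ?] /andP[? ?]] := bounds y y01.
have [_ /andP[? ?]] := bounds u u01.
rewrite ler_norml; apply/andP; split; first lra.
have [->|[y' y'01 [_ upper]]] := crossing_upper del_gt0.
  by have := mulr_ge0 p_ge0 u_ge0; lra.
have [/andP[? ?] /andP[? ?]] := bounds y' y'01; lra.
Qed.

Lemma crossing_estimate_steep {B : R -> R} {e M eta : R} :
  (forall w, 0 <= w <= 1 -> `|A w - B w| <= e) ->
  (forall w, 0 <= w <= 1 -> `|B w| <= M) -> B 0 = 0 -> 0 < eta ->
  (forall w w', 0 <= w <= 1 -> 0 <= w' <= 1 -> `|w - w'| < eta ->
     `|B w - B w'| < e) ->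
  0 < p -> 8 * (M + e) <= p * eta ->
  `|p * (v - u) + B u| <= 4 * e.
Proof.
move=> AB BM B0 eta_gt0 B_unif p_gt0 pM.
have zero01 : 0 <= (0 : R) <= 1 by rewrite lexx ler01.
have e_gt0 : 0 < e by have := B_unif 0 0 zero01 zero01; rewrite !subrr normr0; apply.
have [lo_vu hi_vu] : - (eta / 4) <= v - u /\ v - u <= eta / 4.
  apply/andP; rewrite -ler_norml; apply: (crossing_near p_gt0 eta_gt0 _ pM) => w w01.
  rewrite -(subrK (B w) (A w)) (le_trans (ler_normD _ _)) // addrC.
  by rewrite lerD ?AB ?BM.
have eta8_gt0 : 0 < eta / 8 by rewrite divr_gt0.
have [del [del_gt0 del_le pdel]] := exists_small_step p_ge0 eta8_gt0 e_gt0.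
have AB_bounds w : 0 <= w <= 1 -> - e <= A w - B w <= e.
  by move=> w01; rewrite -ler_norml AB.
(* Both witnesses of the crossing lie within eta of u, as v does within eta / 4. *)
have close w : 0 <= w <= 1 -> w - eta < u < w + eta -> - e < B u - B w < e.
  by move=> w01 uw; rewrite -ltr_norml B_unif // ltr_distl.
have [y y01 [/andP[vy yv] lower]] := crossing_lower del_gt0.
have [? ?] := andP (AB_bounds y y01).
have [|? ?] := andP (close y y01 _); first by apply/andP; split; lra.
rewrite ler_norml; apply/andP; split; first lra.
have [v0|[y' y'01 [/andP[vy' y'v] upper]]] := crossing_upper del_gt0.
  rewrite v0 in lo_vu *; have := mulr_ge0 p_ge0 u_ge0.
  have [|_] := andP (close 0 zero01 _).
    by apply/andP; split; lra.
  by rewrite B0 subr0; lra.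
have [? ?] := andP (AB_bounds y' y'01).
have [|? ?] := andP (close y' y'01 _); first by apply/andP; split; lra.
lra.
Qed.

End Crossing.

Lemma steep_slope {R : realType} (K eta r L : R) : 0 < eta -> 0 <= r ->
  16 * K / eta ^+ 2 <= r -> eta / 2 <= L -> 8 * K <= r * L * eta.
Proof.
move=> eta_gt0 r_ge0 Kr etaL.
have -> : 8 * K = 16 * K / eta ^+ 2 * (eta / 2) * eta by field; rewrite gt_eqF.
apply: ler_wpM2r; first exact: ltW.
apply: (@le_trans _ _ (r * (eta / 2))); last exact: ler_wpM2l.
by apply: ler_wpM2r => //; rewrite divr_ge0 ?ltW.
Qed.

Lemma near_sqrt_nat_ge {R : realType} (c : R) : \forall n \near \oo, c <= Num.sqrt n%:R.
Proof.
near=> n; apply: le_trans (ler_norm c) _; rewrite -sqrtr_sqr ler_wsqrtr //.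
by near: n; exact: nbhs_infty_ger.
Unshelve. all: by end_near. Qed.

Theorem lemmaB2 (R : realType) (d : nat) (C : ('I_d -> R) -> R)
  (alpha_n : nat -> R -> R -> ('I_d -> R) -> R)
  (alpha : R -> R -> ('I_d -> R) -> R) :
  is_copula C ->
  (forall n : nat, (0 < n)%N -> classDn C n (alpha_n n)) ->
  classD0 alpha ->
  (forall e : R, 0 < e -> exists N : nat, forall n : nat, (N <= n)%N ->
     forall s t (u : 'I_d -> R), inDelta s t -> unit_cube u ->
       `|alpha_n n s t u - alpha s t u| <= e) ->
  forall j : 'I_d,
  forall e : R, 0 < e -> exists N : nat, forall n : nat, (N <= n)%N ->
    forall s t u : R, inDelta s t -> 0 <= u <= 1 ->
      `| Num.sqrt n%:R * lam n s t *
           (In_inv n (fun s' t' u' => Ustar n s' t' u'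
                        + (Num.sqrt n%:R)^-1 * marg (alpha_n n) j s' t' u') s t u - u)
         + marg alpha j s t u | <= e.
Proof.
move=> _ alpha_nD [alphaD alpha_cont] alpha_cvg j e e_gt0.
have [[M alphaM] _ _] := alphaD.
pose e1 := e / 4; have e1_gt0 : 0 < e1 by rewrite divr_gt0.
have [eta eta_gt0 alpha_unif] := marg_unif_continuous alpha j alpha_cont _ e1_gt0.
have [N alpha_nN] := alpha_cvg e1 e1_gt0.
suff [N' _ HN'] : \forall n \near \oo, forall s t u, inDelta s t -> 0 <= u <= 1 ->
    `|Num.sqrt n%:R * lam n s t * (In_inv n (fun s' t' u' => Ustar n s' t' u'
         + (Num.sqrt n%:R)^-1 * marg (alpha_n n) j s' t' u') s t u - u)
      + marg alpha j s t u| <= e by exists N'.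
near=> n => s t u st u01.
have n_gt0 : (0 < n)%N by near: n; exact: nbhs_infty_gt.
have r_gt0 : 0 < Num.sqrt n%:R :> R by rewrite sqrtr_gt0 ltr0n.
rewrite In_inv_shift // (_ : e = 4 * e1); last by rewrite /e1 mulrC divfK // pnatr_eq0.
have [alpha_nD' _] := alpha_nD n n_gt0.
have p_ge0 : 0 <= Num.sqrt n%:R * lam n s t.
  by apply: mulr_ge0; [exact: ltW | apply: lam_ge0; case: st => _ []].
have AB w : 0 <= w <= 1 -> `|marg (alpha_n n) j s t w - marg alpha j s t w| <= e1.
  move=> w01; apply: alpha_nN (unit_cube_vec1 j _ w01) => //.
  by near: n; exact: nbhs_infty_ge.
have A1 := classD_marg1 j alpha_nD' st.
have [L_small|L_large] := ltP (lam n s t) (eta / 2).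
  apply: crossing_estimate_flat => // w w01.
  apply: marg_small_near_diag alphaD alpha_unif st w01 _.
  have : n%:R^-1 < eta / 2.
    rewrite invf_plt ?posrE ?ltr0n ?divr_gt0 // invf_div.
    by near: n; exact: nbhs_infty_gtr.
  by have := ltr_sub_lamD n s t n_gt0; lra.
apply: (crossing_estimate_steep p_ge0 u01 A1 AB (M := M) (eta := eta)) => //.
- by move=> w w01; apply: alphaM st (unit_cube_vec1 j _ w01).
- exact: (classD_marg0 j alphaD st).
- by move=> w w' w01 w'01 ww'; apply: alpha_unif; rewrite ?subrr ?normr0.
- by rewrite mulr_gt0 // (lt_le_trans _ L_large) // divr_gt0.
apply: steep_slope; rewrite ?sqrtr_ge0 //.
by near: n; exact: near_sqrt_nat_ge.
Unshelve. all: by end_near. Qed.
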